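(* Fix an integer $r>0$ and let $\preccurlyeq$ be the relation on $\mathcal A$ defined below. Then: (a) $\preccurlyeq$ is a preorder (reflexive and transitive) on $\mathcal A$; (b) for $\mathbf a,\mathbf b\in\mathcal A$, both $\mathbf a\preccurlyeq\mathbf b$ and $\mathbf b\preccurlyeq\mathbf a$ hold if and only if $\dim\mathbf a=\dim\mathbf b$ and $a_i=b_i$ for all $0\le i\le\dim\mathbf a-r$; (c) for $0\le m<\infty$, an element $\mathbf b\in\mathcal A_m$ is a least element of $\mathcal A_m$ if and only if $\dim\mathbf b=m$ and $b_i=2$ for $0\le i\le m-r$; and $\mathbf b\in\mathcal A_\infty$ is a least element of $\mathcal A_\infty$ if and only if $b_i=2$ for all $i\ge0$.
   Context: Let $\mathcal A$ be the set of sequences $\mathbf a=(a_n)_{n\in\mathbb N}$ of nonnegative integers with $a_0>0$ such that for every $n$, if $a_n\le1$ then $a_i=0$ for all $i>n$. For $\mathbf a\in\mathcal A$ put $\dim\mathbf a=\sup\{n: a_n>0\}\in\mathbb N\cup\{\infty\}$; for $0\le m<\infty$ let $\mathcal A_m=\{\mathbf a\in\mathcal A:\dim\mathbf a\ge m\}$ and $\mathcal A_\infty=\bigcap_m\mathcal A_m$. For fixed $r>0$, define $\mathbf a\preccurlyeq\mathbf b$ iff $\dim\mathbf a\le\dim\mathbf b$ and, for every $n\in\mathbb N$, $a_n>b_n$ implies $\dim\mathbf a<n+r$ (where $\infty<n+r$ is false). An element $x$ of a subset $B$ is a least element of $B$ if $x\preccurlyeq b$ for all $b\in B$. *)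

From Stdlib Require Import Arith Lia ClassicalEpsilon.

Inductive natinf : Type := Fin (n : nat) | Inf.

Definition ni_le (x y : natinf) : Prop :=
  match x, y with
  | Fin a, Fin b => a <= b
  | _, Inf => True
  | Inf, Fin _ => False
  end.

Definition ni_lt_nat (x : natinf) (k : nat) : Prop :=
  match x with Fin d => d < k | Inf => False end.

Definition inA (a : nat -> nat) : Prop :=
  0 < a 0 /\ forall n, a n <= 1 -> forall i, n < i -> a i = 0.

Definition is_sup_support (a : nat -> nat) (N : nat) : Prop :=
  (forall n, 0 < a n -> n <= N) /\
  (forall M, (forall n, 0 < a n -> n <= M) -> N <= M).

(* dim a = sup {n : a n > 0} ∈ N ∪ {∞}; it is ∞ iff the set has no
   supremum in N, i.e. is unbounded. *)
Definition dim (a : nat -> nat) : natinf :=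
  match excluded_middle_informative (exists N, is_sup_support a N) with
  | left _ => Fin (epsilon (inhabits 0) (is_sup_support a))
  | right _ => Inf
  end.

Definition prec (r : nat) (a b : nat -> nat) : Prop :=
  ni_le (dim a) (dim b) /\
  forall n, b n < a n -> ni_lt_nat (dim a) (n + r).

Definition inAm (m : nat) (a : nat -> nat) : Prop := inA a /\ ni_le (Fin m) (dim a).
Definition inAinf (a : nat -> nat) : Prop := inA a /\ forall m, ni_le (Fin m) (dim a).

Definition least (r : nat) (B : (nat -> nat) -> Prop) (x : nat -> nat) : Prop :=
  B x /\ forall y, B y -> prec r x y.

(* "0 <= i <= d - r" where d ∈ N ∪ {∞} (integer subtraction; for d = ∞ always). *)
Definition idx_le (i r : nat) (d : natinf) : Prop :=
  match d with Fin d => i + r <= d | Inf => True end.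

(** The order ≼ compares two sequences entrywise only up to index [dim a - r],
    and every entry of a sequence in 𝒜 below its dimension is at least 2
    (an entry [<= 1] cuts the sequence off).  Hence ≼ is a preorder whose
    symmetric part identifies sequences agreeing up to [dim - r], and the
    sequence of 2's up to [m] (followed by 1) is below every element of 𝒜_m:
    any element of 𝒜_m that is smaller at an index [n <= m - r] would have
    an entry [<= 1] there and so dimension [<= n < m]. *)

From Stdlib Require Import Arith Lia ClassicalEpsilon.

Lemma ni_le_refl x : ni_le x x.
Proof. destruct x; simpl; auto. Qed.

Lemma ni_le_trans x y z : ni_le x y -> ni_le y z -> ni_le x z.
Proof. destruct x, y, z; simpl; auto; try tauto; lia. Qed.

Lemma ni_le_antisym x y : ni_le x y -> ni_le y x -> x = y.
Proof. destruct x, y; simpl; try tauto. intros; f_equal; lia. Qed.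

Lemma ni_lt_nat_le_trans x y k : ni_le x y -> ni_lt_nat y k -> ni_lt_nat x k.
Proof. destruct x, y; simpl; try tauto; lia. Qed.

Lemma idx_le_or_lt i r d : idx_le i r d \/ ni_lt_nat d (i + r).
Proof. destruct d as [d|]; simpl; [lia | auto]. Qed.

Lemma idx_le_not_lt i r d : idx_le i r d -> ~ ni_lt_nat d (i + r).
Proof. destruct d; simpl; lia. Qed.

Lemma idx_le_le_Fin_false i r d : 0 < r -> idx_le i r d -> ~ ni_le d (Fin i).
Proof. destruct d; simpl; lia. Qed.

Lemma is_sup_support_unique a N M :
  is_sup_support a N -> is_sup_support a M -> N = M.
Proof. intros [HN HNl] [HM HMl]. specialize (HNl M HM). specialize (HMl N HN). lia. Qed.

Lemma dim_Fin_is_sup a d : dim a = Fin d -> is_sup_support a d.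
Proof.
  unfold dim. destruct excluded_middle_informative as [e|e]; intro H; [|discriminate].
  injection H as <-. apply epsilon_spec. exact e.
Qed.

Lemma dim_eq_Fin a N : is_sup_support a N -> dim a = Fin N.
Proof.
  intro HN. unfold dim. destruct excluded_middle_informative as [e|e].
  - f_equal. apply (is_sup_support_unique a); [apply epsilon_spec, e | exact HN].
  - exfalso. apply e. eauto.
Qed.

Lemma dim_Inf_of_pos a : (forall n, 0 < a n) -> dim a = Inf.
Proof.
  intro Hpos. destruct (dim a) as [d|] eqn:E; auto.
  destruct (dim_Fin_is_sup a d E) as [Hub _]. specialize (Hub (S d) (Hpos _)). lia.
Qed.

Lemma dim_Inf_of_unbounded a : (forall m, ni_le (Fin m) (dim a)) -> dim a = Inf.
Proof. intro H. destruct (dim a) as [d|] eqn:E; auto. specialize (H (S d)). simpl in H. lia. Qed.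

Lemma is_sup_support_of_bounded a n :
  (forall i, n < i -> a i = 0) -> exists N, is_sup_support a N /\ N <= n.
Proof.
  induction n as [|n IH]; intro Hz.
  - exists 0. split; [split|lia].
    + intros [|k] Hk; [lia|]. rewrite Hz in Hk; lia.
    + intros; lia.
  - destruct (a (S n)) eqn:E.
    + destruct IH as [N [HN HNn]].
      * intros i Hi. destruct (Nat.eq_dec i (S n)); [subst; auto | apply Hz; lia].
      * exists N; split; [auto | lia].
    + exists (S n). split; [split|lia].
      * intros k Hk. destruct (le_lt_dec k (S n)); auto. rewrite Hz in Hk; lia.
      * intros M HM. apply HM. lia.
Qed.

Lemma dim_le_of_le1 a i : inA a -> a i <= 1 -> ni_le (dim a) (Fin i).
Proof.
  intros [_ Hcut] Hi. destruct (is_sup_support_of_bounded a i (Hcut i Hi)) as [N [HN HNi]].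
  rewrite (dim_eq_Fin a N HN). exact HNi.
Qed.

Section Prec.

Variable r : nat.

Lemma prec_refl a : prec r a a.
Proof. split; [apply ni_le_refl | intros n Hn; lia]. Qed.

Lemma prec_trans a b c : prec r a b -> prec r b c -> prec r a c.
Proof.
  intros [Hab Hab_lt] [Hbc Hbc_lt]. split; [eapply ni_le_trans; eauto|].
  intros n Hn. destruct (lt_dec (c n) (b n)) as [Hlt|Hge].
  - exact (ni_lt_nat_le_trans _ _ _ Hab (Hbc_lt n Hlt)).
  - apply Hab_lt. lia.
Qed.

Lemma prec_of_agree a b :
  ni_le (dim a) (dim b) -> (forall i, idx_le i r (dim a) -> a i = b i) -> prec r a b.
Proof.
  intros Hdim Hagree. split; auto.
  intros n Hn. destruct (idx_le_or_lt n r (dim a)) as [Hidx|Hlt]; auto.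
  rewrite (Hagree n Hidx) in Hn. lia.
Qed.

Lemma prec_equiv a b :
  prec r a b /\ prec r b a <-> dim a = dim b /\ forall i, idx_le i r (dim a) -> a i = b i.
Proof.
  split.
  - intros [[Hab Hab_lt] [Hba Hba_lt]].
    assert (Edim : dim a = dim b) by (apply ni_le_antisym; auto).
    split; auto. intros i Hidx.
    destruct (lt_eq_lt_dec (a i) (b i)) as [[Hlt|Heq]|Hgt]; auto; exfalso.
    + apply (idx_le_not_lt i r (dim a) Hidx). rewrite Edim. auto.
    + exact (idx_le_not_lt i r (dim a) Hidx (Hab_lt i Hgt)).
  - intros [Edim Hagree]. split; apply prec_of_agree; rewrite ?Edim; try apply ni_le_refl.
    + rewrite <- Edim. exact Hagree.
    + intros i Hi. symmetry. rewrite <- Edim in Hi. auto.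
Qed.

Hypothesis r_pos : 0 < r.

Lemma prec_of_twos b y :
  inA y -> ni_le (dim b) (dim y) ->
  (forall i, idx_le i r (dim b) -> b i = 2) -> prec r b y.
Proof.
  intros Hy Hdim Htwo. split; auto.
  intros n Hn. destruct (idx_le_or_lt n r (dim b)) as [Hidx|Hlt]; auto. exfalso.
  rewrite (Htwo n Hidx) in Hn.
  apply (idx_le_le_Fin_false n r (dim b) r_pos Hidx).
  apply (ni_le_trans _ _ _ Hdim). apply dim_le_of_le1; auto. lia.
Qed.

Lemma twos_of_prec b y :
  inA b -> prec r b y -> ni_le (dim y) (dim b) ->
  (forall i, idx_le i r (dim y) -> y i = 2) ->
  dim b = dim y /\ forall i, idx_le i r (dim y) -> b i = 2.
Proof.
  intros Hb [Hdim Hlt] Hdim' Htwo.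
  assert (Edim : dim b = dim y) by (apply ni_le_antisym; auto).
  split; auto. intros i Hidx.
  destruct (lt_eq_lt_dec (b i) 2) as [[Hsmall|Heq]|Hbig]; auto; exfalso.
  - apply (idx_le_le_Fin_false i r (dim y) r_pos Hidx).
    rewrite <- Edim. apply dim_le_of_le1; auto. lia.
  - apply (idx_le_not_lt i r (dim y) Hidx). rewrite <- Edim.
    apply Hlt. rewrite (Htwo i Hidx). exact Hbig.
Qed.

End Prec.

Definition twos_upto (m : nat) (i : nat) : nat :=
  if i <? m then 2 else if i =? m then 1 else 0.

Lemma dim_twos_upto m : dim (twos_upto m) = Fin m.
Proof.
  apply dim_eq_Fin. unfold twos_upto. split.
  - intros n Hn. destruct (Nat.ltb_spec n m); [lia|].
    destruct (Nat.eqb_spec n m); lia.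
  - intros M HM. apply HM. rewrite Nat.ltb_irrefl, Nat.eqb_refl. lia.
Qed.

Lemma twos_upto_inA m : inA (twos_upto m).
Proof.
  unfold twos_upto. split.
  - destruct (Nat.ltb_spec 0 m); [lia|]. destruct (Nat.eqb_spec 0 m); lia.
  - intros n Hn i Hi. destruct (Nat.ltb_spec n m); [lia|].
    destruct (Nat.ltb_spec i m); [lia|]. destruct (Nat.eqb_spec i m); [lia | auto].
Qed.

Lemma twos_upto_lt m i : i < m -> twos_upto m i = 2.
Proof. intro Hi. unfold twos_upto. destruct (Nat.ltb_spec i m); [auto | lia]. Qed.

Lemma dim_twos : dim (fun _ => 2) = Inf.
Proof. apply dim_Inf_of_pos. lia. Qed.

Lemma twos_inA : inA (fun _ => 2).
Proof. split; [lia | intros n Hn; lia]. Qed.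

Theorem proposition1p3 (r : nat) (hr : 0 < r) :
  (* (a) preorder on 𝒜 *)
  ((forall a, inA a -> prec r a a) /\
   (forall a b c, inA a -> inA b -> inA c -> prec r a b -> prec r b c -> prec r a c)) /\
  (* (b) *)
  (forall a b, inA a -> inA b ->
     (prec r a b /\ prec r b a <->
      dim a = dim b /\ forall i, idx_le i r (dim a) -> a i = b i)) /\
  (* (c) finite m *)
  (forall (m : nat) b, inAm m b ->
     (least r (inAm m) b <-> dim b = Fin m /\ forall i, i + r <= m -> b i = 2)) /\
  (* (c) m = ∞ *)
  (forall b, inAinf b ->
     (least r inAinf b <-> forall i, b i = 2)).
Proof.
  split; [split|split; [|split]].
  - intros a _. apply prec_refl.
  - intros a b c _ _ _. apply prec_trans.
  - intros a b _ _. apply prec_equiv.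
  - intros m b [Hb Hbm]. split.
    + intros [_ Hleast].
      assert (Hy : inAm m (twos_upto m)).
      { split; [apply twos_upto_inA | rewrite dim_twos_upto; apply ni_le_refl]. }
      pose proof (twos_of_prec r hr b (twos_upto m) Hb (Hleast _ Hy)) as Hmin.
      rewrite dim_twos_upto in Hmin. apply Hmin; auto.
      intros i Hi. apply twos_upto_lt. simpl in Hi. lia.
    + intros [Edim Htwo]. split; [split; auto|].
      intros y [Hy Hym]. apply prec_of_twos; auto; rewrite Edim; auto.
  - intros b [Hb Hbinf]. pose proof (dim_Inf_of_unbounded b Hbinf) as Edim. split.
    + intros [_ Hleast].
      assert (Hy : inAinf (fun _ => 2)).
      { split; [apply twos_inA | rewrite dim_twos; simpl; auto]. }
      pose proof (twos_of_prec r hr b _ Hb (Hleast _ Hy)) as Hmin.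
      rewrite dim_twos in Hmin. intro i. apply Hmin; simpl; auto. rewrite Edim; simpl; auto.
    + intros Htwo. split; [split; auto|].
      intros y [Hy Hyinf]. apply prec_of_twos; auto.
      rewrite (dim_Inf_of_unbounded y Hyinf), Edim. simpl; auto.
Qed.
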